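(* Assume that $f\in\mathcal D(\alpha,\beta)$ and $g\in\mathcal D(a,b)$ for some $\alpha,a\ge 0$ and $\beta,b\in\mathbb R$. Let $h:\mathbb R\to\mathbb R$ be defined by $h(k)=(a-\alpha)k-(b-\beta)$. If $g\ge f$, then $\alpha\le a$, and if moreover $\alpha=a$ then $\beta\ge b$. If $g\ge f$ and $g-f\ge h$, then $(g-f)^c\in\mathcal D(a-\alpha,b-\beta)$.
   Context: For $\alpha\ge0$ and $\beta\in\mathbb R$, $\mathcal D(\alpha,\beta)$ denotes the set of increasing convex functions $f:\mathbb R\to\mathbb R_+$ such that $\lim_{z\to-\infty}f(z)=0$ and $\lim_{z\to\infty}\{f(z)-(\alpha z-\beta)\}=0$. For a function $u:\mathbb R\to\mathbb R$, $u^c$ denotes the largest convex function lying below $u$ (the convex hull). *)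

From mathcomp Require Import all_boot all_order all_algebra.
From mathcomp Require Import all_classical all_reals all_analysis.
Set Implicit Arguments. Unset Strict Implicit. Unset Printing Implicit Defensive.
Import Order.TTheory GRing.Theory Num.Theory.
Import numFieldNormedType.Exports.
Local Open Scope classical_set_scope.
Local Open Scope ring_scope.

Definition convex_fun (R : realType) (w : R -> R) : Prop :=
  forall (x y t : R), 0 <= t -> t <= 1 ->
    w (t * x + (1 - t) * y) <= t * w x + (1 - t) * w y.

Definition inD (R : realType) (alpha beta : R) (f : R -> R) : Prop :=
  0 <= alpha /\
  (forall x y, x <= y -> f x <= f y) /\
  convex_fun f /\
  (forall z, 0 <= f z) /\
  (f x @[x --> -oo] --> 0) /\
  ((f x - (alpha * x - beta)) @[x --> +oo] --> 0).

Definition conv_hull (R : realType) (u : R -> R) : R -> R :=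
  fun x => sup [set w x | w in [set w : R -> R | convex_fun w /\ (forall y, w y <= u y)]].

(** With [u := g - f] and [h(k) := (a - alpha) k - (b - beta)], the difference
    [u - h] tends to [0] at [+oo].  As [u >= 0], the affine function [h] is
    bounded below by a function tending to [0], which forces its slope to be
    nonnegative, and its intercept too when the slope vanishes.  Next, [h] and
    [0] are convex minorants of [u], so [max(0, h) <= u^c <= u]: this squeezes
    [u^c] to [0] at [-oo] and [u^c - h] to [0] at [+oo].  Finally, a
    nonnegative convex function vanishing at [-oo] is nondecreasing. *)
From mathcomp Require Import all_boot all_order all_algebra.
From mathcomp Require Import all_classical all_reals all_analysis.
From mathcomp Require Import ring lra.
Set Implicit Arguments. Unset Strict Implicit. Unset Printing Implicit Defensive.
Import Order.TTheory GRing.Theory Num.Theory.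
Import numFieldNormedType.Exports.
Local Open Scope classical_set_scope.
Local Open Scope ring_scope.

Section AffineLowerBound.
Variables (R : realType) (c d : R) (k : R -> R).
Hypothesis k_cvg0 : k x @[x --> +oo] --> 0.
Hypothesis affineDk_ge0 : forall x, 0 <= c * x - d + k x.

Lemma slope_ge0 : 0 <= c.
Proof.
rewrite leNgt; apply/negP => c_lt0.
have c_neq0 : c != 0 by rewrite lt_eqF.
suff /filter_ex[] : \forall x \near (+oo : set_system R), False by [].
near=> x.
have kx_lt1 : `|k x| < 1 by near: x; exact: cvgr0_norm_lt.
have x_gt : (d - 1) / c < x by near: x; apply: nbhs_pinfty_gt; exact: num_real.
have : c * x < d - 1.
  by rewrite -[d - 1](divfK c_neq0) mulrC ltr_nM2r.
have := affineDk_ge0 x; move: kx_lt1; rewrite ltr_norml; lra.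
Unshelve. all: by end_near.
Qed.

Lemma intercept_le0 : c = 0 -> d <= 0.
Proof.
move=> c0; rewrite leNgt; apply/negP => d_gt0.
suff /filter_ex[] : \forall x \near (+oo : set_system R), False by [].
near=> x.
have kx_ltd : `|k x| < d by near: x; exact: cvgr0_norm_lt.
have := affineDk_ge0 x; move: kx_ltd; rewrite c0 mul0r ltr_norml; lra.
Unshelve. all: by end_near.
Qed.

End AffineLowerBound.

Lemma inD_sub_asymptote (R : realType) (f g : R -> R) (alpha beta a b : R) :
  inD alpha beta f -> inD a b g ->
  (g x - f x - ((a - alpha) * x - (b - beta))) @[x --> +oo] --> 0.
Proof.
move=> [_ [_ [_ [_ [_ f_asym]]]]] [_ [_ [_ [_ [_ g_asym]]]]].
have -> : (fun x => g x - f x - ((a - alpha) * x - (b - beta))) =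
          (fun x => (g x - (a * x - b)) - (f x - (alpha * x - beta))).
  by apply/funext => x; ring.
by rewrite -(subr0 0); exact: cvgB.
Qed.

Lemma inD_asymptote_le (R : realType) (f g : R -> R) (alpha beta a b : R) :
  inD alpha beta f -> inD a b g -> (forall x, f x <= g x) ->
  alpha <= a /\ (alpha = a -> b <= beta).
Proof.
move=> Df Dg fg; have k_cvg0 := inD_sub_asymptote Df Dg.
have affineDk_ge0 x : 0 <= (a - alpha) * x - (b - beta) +
    (g x - f x - ((a - alpha) * x - (b - beta))).
  by have := fg x; lra.
split; first by rewrite -subr_ge0; exact: slope_ge0 k_cvg0 affineDk_ge0.
move=> alpha_a; rewrite -subr_le0.
by apply: intercept_le0 k_cvg0 affineDk_ge0 _; rewrite alpha_a subrr.
Qed.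

Lemma convex_fun_affine (R : realType) (c d : R) : convex_fun (fun x => c * x + d).
Proof. by move=> x y t _ _; lra. Qed.

Section ConvexHull.
Variables (R : realType) (u : R -> R).

Lemma le_conv_hull w x :
  convex_fun w -> (forall y, w y <= u y) -> w x <= conv_hull u x.
Proof.
move=> w_convex w_le_u; apply: ub_le_sup; last by exists w.
by exists (u x) => _ [v [_ v_le_u] <-].
Qed.

Hypothesis minorant_ex : exists w, convex_fun w /\ forall y, w y <= u y.

Lemma conv_hull_le x : conv_hull u x <= u x.
Proof.
have [w [w_convex w_le_u]] := minorant_ex.
by apply: ge_sup; [exists (w x), w | move=> _ [v [_ v_le_u] <-]].
Qed.

Lemma conv_hull_convex : convex_fun (conv_hull u).
Proof.
move=> x y t t_ge0 t_le1; have [w [w_convex w_le_u]] := minorant_ex.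
apply: ge_sup; first by exists (w (t * x + (1 - t) * y)), w.
move=> _ [v [v_convex v_le_u] <-]; apply: le_trans (v_convex x y t t_ge0 t_le1) _.
by apply: lerD; apply: ler_wpM2l; rewrite ?subr_ge0 //; exact: le_conv_hull.
Qed.

End ConvexHull.

Section ConvexMonotone.
Variables (R : realType) (c : R -> R).
Hypothesis c_convex : convex_fun c.

Lemma convex_fun_chord_left z x y : z < x < y -> c y <= c x -> c x <= c z.
Proof.
move=> /andP[zx xy] cy_le_cx; set t := (y - x) / (y - z).
have t_gt0 : 0 < t by apply: divr_gt0; lra.
have t_lt1 : t < 1 by rewrite ltr_pdivrMr; lra.
have x_comb : t * z + (1 - t) * y = x by rewrite /t; field; lra.
have := c_convex z y (ltW t_gt0) (ltW t_lt1); rewrite x_comb => cx_le.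
have : (1 - t) * c y <= (1 - t) * c x by rewrite ler_wpM2l //; lra.
by rewrite -[c x <= c z](ler_pM2l t_gt0); lra.
Qed.

Hypothesis c_ge0 : forall x, 0 <= c x.
Hypothesis c_cvg0 : c x @[x --> -oo] --> 0.

Lemma convex_fun_nondecreasing x y : x <= y -> c x <= c y.
Proof.
rewrite le_eqVlt => /predU1P[-> // | xy]; rewrite leNgt; apply/negP => cy_lt_cx.
have cx_gt0 : 0 < c x by apply: le_lt_trans cy_lt_cx.
suff /filter_ex[] : \forall z \near (-oo : set_system R), False by [].
near=> z.
have cz_lt : `|c z| < c x by near: z; exact: cvgr0_norm_lt.
have zx : z < x by near: z; apply: nbhs_ninfty_lt; exact: num_real.
have := @convex_fun_chord_left z x y; rewrite zx xy => /(_ isT (ltW cy_lt_cx)).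
by rewrite ger0_norm ?c_ge0 in cz_lt; lra.
Unshelve. all: by end_near.
Qed.

End ConvexMonotone.

Lemma conv_hull_inD (R : realType) (u : R -> R) (c d : R) :
  0 <= c -> (forall x, 0 <= u x) -> (forall x, c * x - d <= u x) ->
  u x @[x --> -oo] --> 0 -> (u x - (c * x - d)) @[x --> +oo] --> 0 ->
  inD c d (conv_hull u).
Proof.
move=> c_ge0 u_ge0 affine_le_u u_cvg0 u_asym.
have zero_le_u y : 0 * y + 0 <= u y by rewrite mul0r addr0.
have minorant_ex : exists w, convex_fun w /\ forall y, w y <= u y.
  by exists (fun y => c * y - d); split; [exact: convex_fun_affine | exact: affine_le_u].
have hull_ge0 x : 0 <= conv_hull u x.
  by have := le_conv_hull x (convex_fun_affine 0 0) zero_le_u; rewrite mul0r addr0.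
have affine_le_hull x : c * x - d <= conv_hull u x.
  exact: le_conv_hull x (convex_fun_affine c (- d)) affine_le_u.
have hull_le := conv_hull_le minorant_ex.
have hull_cvg0 : conv_hull u x @[x --> -oo] --> 0.
  apply: (squeeze_cvgr (f := fun=> 0) (h := u)); last exact: u_cvg0; last exact: cvg_cst.
  by apply: nearW => x; rewrite hull_ge0 hull_le.
have hull_convex := conv_hull_convex minorant_ex.
split; first exact: c_ge0.
split; first exact: convex_fun_nondecreasing hull_convex hull_ge0 hull_cvg0.
split; first exact: hull_convex.
split; first exact: hull_ge0.
split; first exact: hull_cvg0.
apply: (squeeze_cvgr (f := fun=> 0) (h := fun x => u x - (c * x - d))).
- by apply: nearW => x; rewrite subr_ge0 affine_le_hull lerD2r hull_le.
- exact: cvg_cst.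
- exact: u_asym.
Qed.

Theorem lemma2p4 (R : realType) (f g : R -> R) (alpha beta a b : R) :
  0 <= alpha -> 0 <= a -> inD alpha beta f -> inD a b g ->
  ((forall x, f x <= g x) -> alpha <= a /\ (alpha = a -> b <= beta)) /\
  ((forall x, f x <= g x) ->
   (forall k, (a - alpha) * k - (b - beta) <= g k - f k) ->
   inD (a - alpha) (b - beta) (conv_hull (fun x => g x - f x))).
Proof.
move=> _ _ Df Dg; split; first exact: inD_asymptote_le.
move=> fg h_le_sub; have [alpha_le_a _] := inD_asymptote_le Df Dg fg.
move: (Df) (Dg) => [_ [_ [_ [_ [f_cvg0 _]]]]] [_ [_ [_ [_ [g_cvg0 _]]]]].
apply: conv_hull_inD h_le_sub _ _.
- by rewrite subr_ge0.
- by move=> x; rewrite subr_ge0.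
- by rewrite -(subr0 0); exact: cvgB.
- exact: inD_sub_asymptote.
Qed.
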